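(* Assume (RHS.1), (RHS.2), (BC.1), (BC.2), and, if (RHS.2b) holds, that condition (M.1) holds. If $u_{\mathfrak h}\in\mathbb V_h$ solves the discrete problem, then $$\|u_{\mathfrak h}\|_{L^\infty(\Omega_h)}\le C\|f\|_{L^\infty(\Omega_h)}+\max_{z\in\mathcal N_h^b}|\tilde g_\varepsilon(z)|,$$ where $C$ depends only on $\Omega$ and is independent of $\mathfrak h=(h,\varepsilon,\theta)$.
   Context: Setting: $\Omega\subset\mathbb R^d$ ($d\ge1$) is a bounded domain with continuous boundary. For $r>0$, $\Omega^{(r)}=\{x\in\Omega:\operatorname{dist}(x,\partial\Omega)>r\}$. $\{\mathcal T_h\}_{h>0}$ is a family of meshes of closed simplices, $h=\max_T\operatorname{diam}T$, $\Omega_h$ the interior of the union of the simplices, with $\Omega^{(h)}\subset\Omega_h\subset\Omega$; $\mathcal N_h$ the set of vertices. $\mathbb V_h$: continuous piecewise linear functions on $\mathcal T_h$, hat basis $\{\hat\varphi_z\}$, Lagrange interpolant $\mathcal I_h$. Parameters $\mathfrak h=(h,\varepsilon,\theta)$, $\varepsilon\in[h,\operatorname{diam}\Omega]$, $0<\theta\le1$. $\mathcal N_h^I=\mathcal N_h\cap\Omega^{(2\varepsilon)}$, $\mathcal N_h^b=\mathcal N_h\setminus\mathcal N_h^I$. $\mathbb S_\theta$: finite symmetric subset of the unit sphere $\mathbb S$ such that each $v\in\mathbb S$ has $v_\theta\in\mathbb S_\theta$ with $|v-v_\theta|\le\theta$. For $z\in\mathcal N_h^I$: $\mathcal N_{\mathfrak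 h}(z)=\{z\}\cup\{z+\varepsilon v_\theta:v_\theta\in\mathbb S_\theta\}$, $-\Delta^\diamond_{\infty,\mathfrak h}w(z)=\varepsilon^{-2}\big(2w(z)-\max_{x\in\mathcal N_{\mathfrak h}(z)}\mathcal I_hw(x)-\min_{x\in\mathcal N_{\mathfrak h}(z)}\mathcal I_hw(x)\big)$, $\widetilde{\mathcal N}_{\mathfrak h}(z)=\{z\}\cup\{z'\in\mathcal N_h:\exists v_\theta\in\mathbb S_\theta,\ \hat\varphi_{z'}(z+\varepsilon v_\theta)>0\}$. Assumptions: (RHS.1) $f\in C(\Omega)\cap L^\infty(\Omega)$. (RHS.2) either (RHS.2a) $\sup_\Omega f<0$ or $\inf_\Omega f>0$, or (RHS.2b) $f\equiv0$. (BC.1) $g\in C(\partial\Omega)$. (BC.2) for every $\varepsilon>0$ a function $\tilde g_\varepsilon\in C(\overline\Omega)$ is given such that, if $g\in C^{0,\alpha}(\partial\Omega)$ for some $\alpha\in[0,1]$, then $\tilde g_\varepsilon\in C^{0,\alpha}(\overline\Omega)$ and $\|g-\tilde g_\varepsilon\|_{L^\infty(\partial\Omega)}\le C\varepsilon^\alpha$. (M.1) for every nonempty $S\subset\mathcal N_h^I$ there are $z\in S$, $z'\in\mathcal N_h\setminus S$ with $z'\in\widetilde{\mathcal N}_{\mathfrak h}(z)$. Discrete problem: find $u_{\mathfrak h}\in\mathbb V_h$ with $-\Delta^\diamond_{\infty,\mathfrak h}u_{\mathfrak h}(z)=f(z)$ for $z\in\mathcal N_h^I$ and $u_{\mathfrak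 h}(z)=\tilde g_\varepsilon(z)$ for $z\in\mathcal N_h^b$. *)

From HB Require Import structures.
From mathcomp Require Import all_boot all_order all_algebra.
From mathcomp Require Import all_classical all_reals all_analysis.

Set Implicit Arguments.
Unset Strict Implicit.
Unset Printing Implicit Defensive.

Import Order.TTheory GRing.Theory Num.Theory.
Import numFieldNormedType.Exports.

Local Open Scope classical_set_scope.
Local Open Scope ring_scope.

Section Defs.
Variables (R : realType) (d : nat).

Definition pt := 'rV[R]_d.

Definition enorm (x : pt) : R := Num.sqrt (\sum_(i < d) x ord0 i ^+ 2).

Definition bdry (A : set pt) : set pt := closure A `\` interior A.

Definition dist_bdry (Om : set pt) (x : pt) : R :=
  inf [set enorm (x - y) | y in bdry Om].

Definition Om_in (Om : set pt) (r : R) : set pt :=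
  [set x | Om x /\ r < dist_bdry Om x].

Definition diam (A : set pt) : R :=
  sup [set r | exists x y, A x /\ A y /\ r = enorm (x - y)].

Definition bounded_domain (Om : set pt) : Prop :=
  Om !=set0 /\ open Om /\ connected Om /\
  exists M : R, forall x, Om x -> enorm x <= M.

(** Continuous boundary: near every boundary point, after a rigid rotation,
    Omega is the strict subgraph of a continuous function of the other
    d-1 coordinates. *)
Definition continuous_boundary (Om : set pt) : Prop :=
  forall x0, bdry Om x0 ->
  exists (r : R) (Q : 'M[R]_d) (k : 'I_d) (gam : pt -> R),
    0 < r /\ Q *m Q^T = 1%:M /\ continuous gam /\
    (forall y y' : pt, (forall j, j != k -> y ord0 j = y' ord0 j) -> gam y = gam y') /\
    (forall x, enorm (x - x0) < r ->
       (Om x <-> ((x - x0) *m Q) ord0 k < gam ((x - x0) *m Q))).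

(** Hoelder space C^{0,alpha}(S) (alpha = 0: bounded continuous). *)
Definition holder (alpha : R) (S : set pt) (g : pt -> R) : Prop :=
  {within S, continuous g} /\
  exists L : R, forall x y, S x -> S y -> `|g x - g y| <= L * (enorm (x - y)) `^ alpha.

Definition simplex := {ffun 'I_d.+1 -> pt}.

Definition barycentric (l : 'I_d.+1 -> R) : Prop :=
  (forall i, 0 <= l i) /\ \sum_i l i = 1.

Definition subhull (T : simplex) (P : 'I_d.+1 -> bool) : set pt :=
  [set x | exists l, barycentric l /\ (forall i, ~~ P i -> l i = 0) /\
                     x = \sum_i l i *: T i].

Definition hull (T : simplex) : set pt := subhull T (fun _ => true).

Definition affinely_independent (T : simplex) : Prop :=
  forall c : 'I_d.+1 -> R, \sum_i c i = 0 -> \sum_i c i *: T i = 0 ->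
    forall i, c i = 0.

Definition is_mesh (M : seq simplex) : Prop :=
  (forall T, T \in M -> affinely_independent T) /\
  (forall T T', T \in M -> T' \in M ->
     hull T `&` hull T' = subhull T (fun i => T i \in [seq T' j | j <- enum 'I_d.+1])).

Definition meshsize (M : seq simplex) : R :=
  \big[Num.max/0]_(T <- M) \big[Num.max/0]_(i < d.+1) \big[Num.max/0]_(j < d.+1)
     enorm (T i - T j).

Definition Om_h (M : seq simplex) : set pt :=
  interior [set x | exists T, T \in M /\ hull T x].

Definition nodes (M : seq simplex) : seq pt :=
  undup (flatten [seq [seq T i | i <- enum 'I_d.+1] | T : simplex <- M]).
Definition Nh (M : seq simplex) : set pt := [set z | z \in nodes M].

(** V_h: functions that are affine on every simplex of the mesh
    (hence continuous piecewise linear on the closure of Omega_h;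
    values outside the mesh are irrelevant). *)
Definition Vh (M : seq simplex) (w : pt -> R) : Prop :=
  forall T, T \in M -> forall l, barycentric l ->
    w (\sum_i l i *: T i) = \sum_i l i * w (T i).

Definition hat_basis (M : seq simplex) (hat : pt -> pt -> R) : Prop :=
  forall z, Nh M z -> Vh M (hat z) /\
    forall z', Nh M z' -> hat z z' = (z' == z)%:R.

Definition interp (M : seq simplex) (hat : pt -> pt -> R) (w : pt -> R) : pt -> R :=
  fun x => \sum_(z <- nodes M) w z * hat z x.

Definition is_Stheta (theta : R) (S : seq pt) : Prop :=
  (forall v, v \in S -> enorm v = 1) /\
  (forall v, v \in S -> - v \in S) /\
  (forall v : pt, enorm v = 1 -> exists2 w, w \in S & enorm (v - w) <= theta).

Definition NhI (Om : set pt) (M : seq simplex) (eps : R) : set pt :=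
  Nh M `&` Om_in Om (2 * eps).

Definition disc_inf_lap (M : seq simplex) (hat : pt -> pt -> R) (eps : R)
    (S : seq pt) (w : pt -> R) (z : pt) : R :=
  let Iw := interp M hat w in
  eps ^-2 * (2 * w z
             - \big[Num.max/Iw z]_(v <- S) Iw (z + eps *: v)
             - \big[Num.min/Iw z]_(v <- S) Iw (z + eps *: v)).

Definition Ntilde (M : seq simplex) (hat : pt -> pt -> R) (eps : R)
    (S : seq pt) (z : pt) : set pt :=
  [set z] `|` [set z' | Nh M z' /\
                exists2 v, v \in S & 0 < hat z' (z + eps *: v)].

Definition cond_M1 (Om : set pt) (M : seq simplex) (hat : pt -> pt -> R)
    (eps : R) (S : seq pt) : Prop :=
  forall Sn : set pt, Sn `<=` NhI Om M eps -> Sn !=set0 ->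
    exists z z', Sn z /\ (Nh M `\` Sn) z' /\ Ntilde M hat eps S z z'.

End Defs.

From HB Require Import structures.
From mathcomp Require Import all_boot all_order all_algebra.
From mathcomp Require Import all_classical all_reals all_analysis.
From mathcomp Require Import ring lra.

Set Implicit Arguments.
Unset Strict Implicit.
Unset Printing Implicit Defensive.

Import Order.TTheory GRing.Theory Num.Theory.
Import numFieldNormedType.Exports.
Local Open Scope classical_set_scope.
Local Open Scope ring_scope.

(* Comparison with a truncated quadratic barrier.  If -Delta^diamond U < c at
   the interior nodes, then U + c min(|x|^2, rho^2) attains its maximum over
   the nodes at a boundary node: at an interior maximiser z, convexity of
   |x|^2 on the simplices containing the stencil points z + eps v bounds the
   interpolant there by U(z) - c (2 eps <z, v> + eps^2), and by the symmetry of
   S_theta the largest plus the smallest of these values is at most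
   2 U(z) - c eps^2, i.e. -Delta^diamond U(z) >= c.  Stencil simplices lie
   within one mesh size h <= diam Omega of Omega, so rho = 3 sup_Omega |x|
   works; applying this to u and -u with c = sup |f| gives C = rho^2. *)

Section Euclidean.
Variables (R : realType) (d : nat).
Implicit Types (x y : 'rV[R]_d) (a b : R).

Definition sqnorm x : R := \sum_(i < d) x ord0 i ^+ 2.
Definition dotp x y : R := \sum_(i < d) x ord0 i * y ord0 i.

Lemma sqnorm_ge0 x : 0 <= sqnorm x.
Proof. by apply: sumr_ge0 => i _; exact: sqr_ge0. Qed.

Lemma enorm_ge0 x : 0 <= enorm x.
Proof. exact: sqrtr_ge0. Qed.

Lemma sqr_enorm x : enorm x ^+ 2 = sqnorm x.
Proof. by rewrite /enorm sqr_sqrtr // sqnorm_ge0. Qed.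

Lemma sqnorm_le_sqr x r : enorm x <= r -> sqnorm x <= r ^+ 2.
Proof. by move=> xr; rewrite -sqr_enorm; have := enorm_ge0 x; nra. Qed.

Lemma sqnormDZ a b x y :
  sqnorm (a *: x + b *: y) =
  a ^+ 2 * sqnorm x + 2 * a * b * dotp x y + b ^+ 2 * sqnorm y.
Proof.
rewrite /sqnorm /dotp !mulr_sumr -!big_split /=; apply: eq_bigr => i _.
by rewrite !mxE; ring.
Qed.

Lemma sqnormD x y : sqnorm (x + y) = sqnorm x + 2 * dotp x y + sqnorm y.
Proof. by rewrite -[x]scale1r -[y]scale1r sqnormDZ !scale1r; ring. Qed.

Lemma dotp_sqr_le x y : dotp x y ^+ 2 <= sqnorm x * sqnorm y.
Proof.
have := sqnorm_ge0 (sqnorm y *: x + (- dotp x y) *: y); rewrite sqnormDZ.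
have [y0|y_gt0] := eqVneq (sqnorm y) 0; last first.
  have := sqnorm_ge0 y; rewrite le_eqVlt eq_sym (negbTE y_gt0) /= => y_pos; nra.
have yi0 i : y ord0 i = 0.
  by apply/eqP; rewrite -sqrf_eq0 (psumr_eq0P (fun j _ => sqr_ge0 (y ord0 j)) y0).
suff -> : dotp x y = 0 by rewrite expr0n /= mulr_ge0 ?sqnorm_ge0.
by rewrite /dotp big1 // => i _; rewrite yi0 mulr0.
Qed.

Lemma enormD_le x y : enorm (x + y) <= enorm x + enorm y.
Proof.
have nx := enorm_ge0 x; have ny := enorm_ge0 y.
have cs : dotp x y <= enorm x * enorm y.
  have := dotp_sqr_le x y; rewrite -!sqr_enorm -exprMn => le2.
  have := mulr_ge0 nx ny; nra.
rewrite -(ger0_norm (addr_ge0 nx ny)) -(sqrtr_sqr (enorm x + enorm y)).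
apply: (@ler_wsqrtr _ (sqnorm (x + y))).
by rewrite sqnormD -!sqr_enorm; nra.
Qed.

Lemma enormZ a x : enorm (a *: x) = `|a| * enorm x.
Proof.
rewrite /enorm -sqrtr_sqr -sqrtrM ?sqr_ge0 // mulr_sumr.
by congr Num.sqrt; apply: eq_bigr => i _; rewrite mxE exprMn.
Qed.

Lemma enormN x : enorm (- x) = enorm x.
Proof. by rewrite -scaleN1r enormZ normrN1 mul1r. Qed.

Lemma convex_comb_sqr_le (I : finType) (l F : I -> R) :
  (forall i, 0 <= l i) -> \sum_i l i = 1 ->
  (\sum_i l i * F i) ^+ 2 <= \sum_i l i * F i ^+ 2.
Proof.
move=> l_ge0 l_sum1.
have var_eq m : \sum_i l i * (F i - m) ^+ 2 =
    \sum_i l i * F i ^+ 2 - 2 * m * (\sum_i l i * F i) + m ^+ 2 * \sum_i l i.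
  rewrite !mulr_sumr -sumrB -big_split /=; apply: eq_bigr => i _; ring.
have := var_eq (\sum_i l i * F i); rewrite l_sum1.
have : 0 <= \sum_i l i * (F i - \sum_i l i * F i) ^+ 2.
  by apply: sumr_ge0 => i _; rewrite mulr_ge0 ?sqr_ge0.
lra.
Qed.

Lemma sqnorm_convex_comb (l : 'I_d.+1 -> R) (T : 'I_d.+1 -> 'rV[R]_d) :
  barycentric l -> sqnorm (\sum_i l i *: T i) <= \sum_i l i * sqnorm (T i).
Proof.
move=> [l_ge0 l_sum1]; rewrite /sqnorm.
under eq_bigr => k _ do rewrite summxE.
under [X in _ <= X]eq_bigr => i _ do rewrite mulr_sumr.
rewrite exchange_big /=; apply: ler_sum => k _.
under eq_bigr => i _ do rewrite mxE.
exact: convex_comb_sqr_le.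
Qed.

End Euclidean.

Section Mesh.
Variables (R : realType) (d : nat).
Implicit Types (M : seq (simplex R d)) (T : simplex R d).

Lemma mesh_vertex_node M T i : T \in M -> T i \in nodes M.
Proof.
move=> TM; rewrite /nodes mem_undup; apply/flattenP.
exists [seq T j | j <- enum 'I_d.+1]; first by apply/mapP; exists T.
by apply/mapP; exists i; rewrite ?mem_enum.
Qed.

Lemma le_meshsize M T i j : T \in M -> enorm (T i - T j) <= meshsize M.
Proof.
move=> TM; rewrite /meshsize.
apply: le_trans (le_bigmax_seq _ _ xpredT _ TM isT).
apply: le_trans (le_bigmax_seq _ _ xpredT _ (mem_index_enum i) isT).
exact: (le_bigmax_seq _ _ xpredT _ (mem_index_enum j) isT).
Qed.

Lemma hull_vertex_dist T (h : R) y i :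
  (forall i j, enorm (T i - T j) <= h) -> hull T y -> enorm (T i - y) <= h.
Proof.
move=> Th [l [bl [_ ->]]].
have h_ge0 : 0 <= h by apply: le_trans (Th i i); exact: enorm_ge0.
have -> : T i - \sum_j l j *: T j = \sum_j l j *: (T i - T j).
  by rewrite (eq_bigr _ (fun j _ => scalerBr _ _ _)) sumrB -scaler_suml bl.2 scale1r.
rewrite -(ger0_norm h_ge0) -sqrtr_sqr; apply: (@ler_wsqrtr _ (sqnorm _)).
apply: (le_trans (@sqnorm_convex_comb _ _ l (fun j => T i - T j) bl)).
rewrite -[h ^+ 2]mul1r -bl.2 mulr_suml; apply: ler_sum => j _.
rewrite ler_wpM2l ?bl.1 // -sqr_enorm.
by have := Th i j; have := enorm_ge0 (T i - T j); nra.
Qed.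

Lemma sum_seq_delta (s : seq 'rV[R]_d) (W : 'rV[R]_d -> R) x :
  uniq s -> x \in s -> \sum_(z <- s) W z * (x == z)%:R = W x.
Proof.
move=> s_uniq xs; rewrite (bigD1_seq x) //= eqxx mulr1 big1 ?addr0 // => z.
by rewrite eq_sym => /negbTE ->; rewrite mulr0.
Qed.

Variables (M : seq (simplex R d)) (hat : 'rV[R]_d -> 'rV[R]_d -> R).

Lemma Vh_norm_le U T x K : Vh M U -> T \in M -> hull T x ->
  (forall z, z \in nodes M -> `|U z| <= K) -> `|U x| <= K.
Proof.
move=> UVh TM [l [bl [_ ->]]] UK; rewrite (UVh T TM l bl).
apply: le_trans (ler_norm_sum _ _ _) _.
rewrite -[K]mul1r -bl.2 mulr_suml; apply: ler_sum => i _.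
by rewrite normrM ger0_norm ?bl.1 // ler_wpM2l ?bl.1 // UK // mesh_vertex_node.
Qed.

Lemma interpN W x : interp M hat (fun y => - W y) x = - interp M hat W x.
Proof. by rewrite /interp -sumrN; apply: eq_bigr => z _; rewrite mulNr. Qed.

Lemma disc_inf_lapN eps S W z :
  disc_inf_lap M hat eps S (fun y => - W y) z = - disc_inf_lap M hat eps S W z.
Proof.
rewrite /disc_inf_lap /= !interpN.
under eq_bigr => v _ do rewrite interpN.
under [X in _ - X]eq_bigr => v _ do rewrite interpN.
rewrite -(big_morph _ (@oppr_max R) (opprK _)).
rewrite -(big_morph _ (@oppr_min R) (opprK _)) !opprK.
by rewrite -mulrN; congr (_ * _); lra.
Qed.

Hypothesis hatM : hat_basis M hat.

Lemma interp_node W z : z \in nodes M -> interp M hat W z = W z.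
Proof.
move=> zN; rewrite /interp (eq_big_seq (fun z' => W z' * (z == z')%:R)).
  by rewrite sum_seq_delta // undup_uniq.
by move=> z' z'N; rewrite ((hatM z'N).2 z zN).
Qed.

Lemma interp_convex_comb W T l : T \in M -> barycentric l ->
  interp M hat W (\sum_i l i *: T i) = \sum_i l i * W (T i).
Proof.
move=> TM bl.
rewrite /interp (eq_big_seq (fun z => \sum_i W z * (l i * (T i == z)%:R))).
  rewrite exchange_big /=; apply: eq_bigr => i _.
  under eq_bigr => z _ do rewrite mulrCA.
  by rewrite -mulr_sumr sum_seq_delta ?undup_uniq ?mesh_vertex_node.
move=> z zN; rewrite ((hatM zN).1 T TM l bl) mulr_sumr; apply: eq_bigr => i _.
by rewrite ((hatM zN).2 (T i) (mesh_vertex_node i TM)).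
Qed.

End Mesh.

Section DistanceToBoundary.
Variables (R : realType) (d : nat) (Om : set 'rV[R]_d).

Lemma dist_bdry_le x b : bdry Om b -> dist_bdry Om x <= enorm (x - b).
Proof.
move=> bb; apply: ge_inf; last by exists b.
by exists 0 => _ [y _ <-]; exact: enorm_ge0.
Qed.

Lemma dist_bdry_shift x w : dist_bdry Om x - enorm w <= dist_bdry Om (x + w).
Proof.
have [[b bb]|no_bdry] := pselect (bdry Om !=set0); last first.
  have bdry0 : bdry Om = set0.
    by apply/seteqP; split=> // b bb; apply: no_bdry; exists b.
  by rewrite /dist_bdry bdry0 !image_set0 inf0 sub0r oppr_le0 enorm_ge0.
apply: lb_le_inf; first by exists (enorm (x + w - b)), b.
move=> _ [c cb <-]; have := dist_bdry_le x cb.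
have -> : x - c = (x + w - c) + - w by rewrite addrAC addrK.
have := enormD_le (x + w - c) (- w); rewrite enormN; lra.
Qed.

Lemma segment_end_in_open z w : open Om -> Om z ->
  (forall t : R, 0 <= t -> t <= 1 -> ~ bdry Om (z + t *: w)) -> Om (z + w).
Proof.
move=> Om_open Omz no_bdry.
pose f (t : R) := z + t *: w; pose seg := f @` `[0, 1].
have seg_conn : connected seg.
  apply: connected_continuous_connected; last first.
    apply: continuous_subspaceT => t.
    have cst_z : {for t, continuous (fun _ : R => z)} by exact: cst_continuous.
    have lin_w : {for t, continuous (fun s : R => s *: w)} by exact: scalel_continuous.
    exact: (continuousD cst_z lin_w).
  by apply/connected_intervalP; exact: interval_is_interval.
(* seg `&` Om is clopen in seg: the segment meets closure Om only inside Om. *)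
have seg_Om : seg `&` Om = seg.
  apply: seg_conn.
  - exists z; split => //; exists 0; first by rewrite /= in_itv /= lexx ler01.
    by rewrite /f scale0r addr0.
  - by exists Om.
  - exists (closure Om); first exact: closed_closure.
    apply/seteqP; split => y [segy Omy]; split => //; first exact: subset_closure.
    case: segy => t; rewrite /= in_itv /= => /andP[t0 t1] ty.
    rewrite -ty in Omy *; apply: contrapT => nOm; apply: (no_bdry t t0 t1).
    by split => //; rewrite (interior_id Om).1.
have : seg (z + w) by exists 1; rewrite /f ?scale1r // /= in_itv /= ler01 lexx.
by rewrite -seg_Om => -[].
Qed.

Lemma Om_in_shift r x w : open Om -> 0 <= r ->
  Om_in Om (r + enorm w) x -> Om_in Om r (x + w).
Proof.
move=> Om_open r_ge0 [Omx dx]; split; last by have := dist_bdry_shift x w; lra.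
apply: segment_end_in_open => // t t0 t1 bb.
have := dist_bdry_le x bb.
rewrite opprD addrA subrr sub0r enormN enormZ ger0_norm //.
by have := enorm_ge0 w; nra.
Qed.

End DistanceToBoundary.

Section Stencil.
Variables (R : realType) (d : nat).

Lemma Stheta_neq_nil theta (S : seq 'rV[R]_d) :
  (0 < d)%N -> is_Stheta theta S -> S != [::].
Proof.
move=> d_gt0 [_ [_ S_dense]]; pose e : 'rV[R]_d := delta_mx ord0 (Ordinal d_gt0).
have e_unit : enorm e = 1.
  rewrite /enorm (bigD1 (Ordinal d_gt0)) //= mxE !eqxx /= expr1n.
  rewrite big1 ?addr0 ?sqrtr1 // => i.
  by rewrite mxE eqxx /= => /negbTE ->; rewrite expr0n.
by have [w + _] := S_dense e e_unit; case: (S).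
Qed.

Lemma diam_le (A : set 'rV[R]_d) Mb :
  A !=set0 -> (forall x, A x -> enorm x <= Mb) -> diam A <= 2 * Mb.
Proof.
move=> [a Aa] A_bd; apply: ge_sup; first by exists (enorm (a - a)), a, a.
move=> _ [x [y [Ax [Ay ->]]]]; have := enormD_le x (- y); rewrite enormN.
by have := A_bd x Ax; have := A_bd y Ay; lra.
Qed.

Definition stencil_within (M : seq (simplex R d)) (eps : R) (S : seq 'rV[R]_d)
    (rho : R) (z : 'rV[R]_d) : Prop :=
  forall v, v \in S ->
    exists2 T, T \in M & hull T (z + eps *: v) /\ forall i, enorm (T i) <= rho.

Lemma Om_in_stencil_within (Om : set 'rV[R]_d) M h eps S Mb rho z :
  open Om -> (forall x, Om x -> enorm x <= Mb) -> Om_in Om h `<=` Om_h M ->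
  (forall T, T \in M -> forall i j, enorm (T i - T j) <= h) ->
  0 <= h -> h <= eps -> Mb + h <= rho -> (forall v, v \in S -> enorm v = 1) ->
  Om_in Om (2 * eps) z -> stencil_within M eps S rho z.
Proof.
move=> Om_open Om_bd hOmh Mh h_ge0 heps rho_ge S_unit [Omz dz] v vS.
have eps_ge0 : 0 <= eps := le_trans h_ge0 heps.
have y_in : Om_in Om h (z + eps *: v).
  have [Omy dy] : Om_in Om eps (z + eps *: v).
    apply: Om_in_shift => //; split => //.
    by rewrite enormZ S_unit // mulr1 ger0_norm //; lra.
  by split => //; lra.
have [T [TM yT]] := interior_subset (hOmh _ y_in).
exists T => //; split => // i.
have -> : T i = (z + eps *: v) + (T i - (z + eps *: v)) by rewrite addrC subrK.
apply: le_trans (enormD_le _ _) _.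
by have := Om_bd _ y_in.1; have := hull_vertex_dist i (Mh T TM) yT; lra.
Qed.

End Stencil.

Lemma seq_argmax (R : realType) (I : eqType) (s : seq I) (F : I -> R) :
  s != [::] -> exists2 x, x \in s & forall y, y \in s -> F y <= F x.
Proof.
elim: s => [|a s IH] // _; have [->|s_neq0] := eqVneq s [::].
  by exists a; rewrite ?mem_head // => y; rewrite inE => /eqP->.
have [x xs x_max] := IH s_neq0; have [Fax|Fxa] := leP (F a) (F x).
  by exists x; rewrite ?inE ?xs ?orbT // => y; rewrite inE => /orP[/eqP->|/x_max].
exists a; first exact: mem_head.
by move=> y; rewrite inE => /orP[/eqP->//|/x_max Fyx]; apply: le_trans Fyx (ltW Fxa).
Qed.

Lemma second_difference_ge (R : realType) (d : nat) (S : seq 'rV[R]_d) z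
    (F : 'rV[R]_d -> R) (a c eps : R) :
  0 <= c -> 0 <= eps -> (forall v, v \in S -> - v \in S) -> S != [::] ->
  (forall v, v \in S -> F v <= a - c * (2 * eps * dotp z v + eps ^+ 2)) ->
  c * eps ^+ 2 <= 2 * a - \big[Num.max/a]_(v <- S) F v - \big[Num.min/a]_(v <- S) F v.
Proof.
move=> c_ge0 eps_ge0 S_sym S_neq0 F_le.
have dotpN v : dotp z (- v) = - dotp z v.
  by rewrite /dotp -sumrN; apply: eq_bigr => i _; rewrite mxE mulrN.
have [v0 v0S v0_max] := seq_argmax (dotp z) S_neq0; set m := dotp z v0 in v0_max.
have dotp_ge v : v \in S -> - m <= dotp z v.
  by move=> vS; have := v0_max _ (S_sym v vS); rewrite dotpN => ?; lra.
have m_ge0 : 0 <= m by have := dotp_ge v0 v0S; rewrite -/m => ?; lra.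
have ce_ge0 := mulr_ge0 c_ge0 eps_ge0.
have max_le :
    \big[Num.max/a]_(v <- S) F v <= Num.max a (a - c * (eps ^+ 2 - 2 * eps * m)).
  rewrite big_seq; apply: bigmax_le => [|v vS]; first by rewrite le_max lexx.
  rewrite le_max; apply/orP; right; apply: le_trans (F_le v vS) _.
  have : 0 <= dotp z v + m by have := dotp_ge v vS; lra.
  by move/(mulr_ge0 ce_ge0) => ?; nra.
have min_le : \big[Num.min/a]_(v <- S) F v <= a - c * (2 * eps * m + eps ^+ 2).
  exact: bigmin_inf_seq v0S isT (F_le v0 v0S).
have cem_ge0 := mulr_ge0 ce_ge0 m_ge0; have ce2_ge0 := mulr_ge0 ce_ge0 eps_ge0.
by move: max_le; rewrite maxEle; case: ifP => _ max_le; nra.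
Qed.

Section ComparisonPrinciple.
Variables (R : realType) (d : nat) (M : seq (simplex R d)).
Variables (hat : 'rV[R]_d -> 'rV[R]_d -> R) (eps rho : R) (S : seq 'rV[R]_d).
Variable I : set 'rV[R]_d.
Hypotheses (hatM : hat_basis M hat) (eps_gt0 : 0 < eps).
Hypotheses (S_unit : forall v, v \in S -> enorm v = 1)
  (S_sym : forall v, v \in S -> - v \in S) (S_neq0 : S != [::]).
Hypothesis I_stencil : forall z, I z -> enorm z <= rho /\ stencil_within M eps S rho z.

Lemma interp_stencil_le U c zs : 0 <= c -> I zs ->
  (forall z, z \in nodes M ->
     U z + c * Num.min (sqnorm z) (rho ^+ 2) <= U zs + c * sqnorm zs) ->
  forall v, v \in S ->
    interp M hat U (zs + eps *: v) <= U zs - c * (2 * eps * dotp zs v + eps ^+ 2).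
Proof.
move=> c_ge0 Izs zs_max v vS.
have [T TM [[l [bl [_ y_eq]]] T_bd]] := (I_stencil Izs).2 v vS.
have sqnorm_y : sqnorm (zs + eps *: v) = sqnorm zs + 2 * eps * dotp zs v + eps ^+ 2.
  by rewrite -{1}[zs]scale1r sqnormDZ -(sqr_enorm v) S_unit //; ring.
have jensen := sqnorm_convex_comb T bl; rewrite -y_eq sqnorm_y in jensen.
have UT_le i : U (T i) <= U zs + c * sqnorm zs - c * sqnorm (T i).
  have := zs_max _ (mesh_vertex_node i TM).
  by rewrite (min_idPl (sqnorm_le_sqr (T_bd i))); lra.
rewrite y_eq interp_convex_comb //.
apply: (@le_trans _ _ (\sum_i l i * (U zs + c * sqnorm zs - c * sqnorm (T i)))).
  by apply: ler_sum => i _; rewrite ler_wpM2l ?bl.1 ?UT_le.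
have -> : \sum_i l i * (U zs + c * sqnorm zs - c * sqnorm (T i)) =
    (U zs + c * sqnorm zs) * \sum_i l i - c * \sum_i l i * sqnorm (T i).
  by rewrite !mulr_sumr -sumrB; apply: eq_bigr => i _; ring.
by rewrite bl.2 mulr1; have := ler_wpM2l c_ge0 jensen; lra.
Qed.

Lemma comparison_lt U c G : 0 <= c ->
  (forall z, I z -> disc_inf_lap M hat eps S U z < c) ->
  (forall z, z \in nodes M -> ~ I z -> U z <= G) ->
  forall z, z \in nodes M -> U z <= G + c * rho ^+ 2.
Proof.
move=> c_ge0 disc_lt U_bd z zN.
(* Truncating at rho^2 keeps the barrier below c rho^2 at every node, while it
   is exactly c |x|^2 at the interior nodes and the stencil vertices. *)
pose D x := U x + c * Num.min (sqnorm x) (rho ^+ 2).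
have nodes_neq0 : nodes M != [::] by apply: contraTneq zN => ->.
have [zs zsN zs_max] := seq_argmax D nodes_neq0.
suff : D zs <= G + c * rho ^+ 2.
  apply: le_trans; apply: le_trans (zs_max z zN).
  by rewrite lerDl mulr_ge0 // le_min sqnorm_ge0 sqr_ge0.
have [Izs|nIzs] := pselect (I zs); last first.
  by rewrite lerD ?U_bd // ler_wpM2l // ge_min lexx orbT.
have zs_max' z' : z' \in nodes M -> D z' <= U zs + c * sqnorm zs.
  by rewrite -(min_idPl (sqnorm_le_sqr (I_stencil Izs).1)); exact: zs_max.
have := second_difference_ge c_ge0 (ltW eps_gt0) S_sym S_neq0
  (interp_stencil_le c_ge0 Izs zs_max').
have := disc_lt zs Izs; rewrite /disc_inf_lap /= interp_node //.
by rewrite ltNge ler_pdivlMl ?exprn_gt0 // mulrC => /negP.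
Qed.

Lemma comparison_le U c G : 0 <= c ->
  (forall z, I z -> disc_inf_lap M hat eps S U z <= c) ->
  (forall z, z \in nodes M -> ~ I z -> U z <= G) ->
  forall z, z \in nodes M -> U z <= G + c * rho ^+ 2.
Proof.
move=> c_ge0 disc_le U_bd z zN; apply/ler_addgt0Pr => e e_gt0.
pose e' := e / (rho ^+ 2 + 1).
have rho1_gt0 : 0 < rho ^+ 2 + 1 := ltr_wpDl (sqr_ge0 rho) ltr01.
have e'_gt0 : 0 < e' by rewrite divr_gt0.
have disc_lt y : I y -> disc_inf_lap M hat eps S U y < c + e'.
  by move=> Iy; apply: le_lt_trans (disc_le y Iy) _; rewrite ltrDl.
have := comparison_lt (addr_ge0 c_ge0 (ltW e'_gt0)) disc_lt U_bd zN.
have : e' * rho ^+ 2 <= e by rewrite /e' mulrAC ler_pdivrMr //; nra.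
lra.
Qed.

Lemma comparison_norm_le u c G : 0 <= c ->
  (forall z, I z -> `|disc_inf_lap M hat eps S u z| <= c) ->
  (forall z, z \in nodes M -> ~ I z -> `|u z| <= G) ->
  forall z, z \in nodes M -> `|u z| <= G + c * rho ^+ 2.
Proof.
move=> c_ge0 disc_le u_bd z zN; rewrite ler_norml; apply/andP; split.
  rewrite lerNl; apply: (comparison_le (U := fun y => - u y)) => // [y Iy|y yN nIy].
    by rewrite disc_inf_lapN; apply: le_trans (disc_le y Iy); rewrite -normrN ler_norm.
  by apply: le_trans (u_bd y yN nIy); rewrite -normrN ler_norm.
apply: comparison_le => // [y Iy|y yN nIy].
  exact: le_trans (ler_norm _) (disc_le y Iy).
exact: le_trans (ler_norm _) (u_bd y yN nIy).
Qed.

End ComparisonPrinciple.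

Theorem lemma3p4 (R : realType) (d : nat) (Om : set 'rV[R]_d) :
  (0 < d)%N -> bounded_domain Om -> continuous_boundary Om ->
  exists C : R,
  forall (M : seq (simplex R d)) (h eps theta : R) (S : seq 'rV[R]_d)
         (hat : 'rV[R]_d -> 'rV[R]_d -> R)
         (f g : 'rV[R]_d -> R) (gt : R -> 'rV[R]_d -> R) (u : 'rV[R]_d -> R),
  (* mesh *)
  is_mesh M -> 0 < h -> h = meshsize M ->
  Om_in Om h `<=` Om_h M -> Om_h M `<=` Om ->
  hat_basis M hat ->
  (* parameters *)
  h <= eps -> eps <= diam Om -> 0 < theta -> theta <= 1 -> is_Stheta theta S ->
  (* (RHS.1) *)
  {within Om, continuous f} -> (exists B : R, forall x, Om x -> `|f x| <= B) ->
  (* (RHS.2) *)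
  ((sup [set f x | x in Om] < 0 \/ 0 < inf [set f x | x in Om])
     \/ (forall x, Om x -> f x = 0)) ->
  (* (BC.1) *)
  {within bdry Om, continuous g} ->
  (* (BC.2) *)
  (forall e, 0 < e -> {within closure Om, continuous (gt e)}) ->
  (forall alpha, 0 <= alpha -> alpha <= 1 -> holder alpha (bdry Om) g ->
     (forall e, 0 < e -> holder alpha (closure Om) (gt e)) /\
     exists Cg : R, forall e, 0 < e -> forall x, bdry Om x ->
       `|g x - gt e x| <= Cg * e `^ alpha) ->
  (* (M.1) in case (RHS.2b) *)
  ((forall x, Om x -> f x = 0) -> cond_M1 Om M hat eps S) ->
  (* u solves the discrete problem *)
  Vh M u ->
  (forall z, NhI Om M eps z -> disc_inf_lap M hat eps S u z = f z) ->
  (forall z, (Nh M `\` NhI Om M eps) z -> u z = gt eps z) ->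
  forall x, Om_h M x ->
    `|u x| <= C * sup [set `|f y| | y in Om_h M]
              + \big[Num.max/0]_(z <- nodes M | z \notin NhI Om M eps) `|gt eps z|.
Proof.
move=> d_gt0 [[x0 Omx0] [Om_open [_ [Mb Om_bd]]]] _.
have Mb_ge0 : 0 <= Mb := le_trans (enorm_ge0 x0) (Om_bd x0 Omx0).
exists ((3 * Mb) ^+ 2) => M h eps theta S hat f g gt u _ h_gt0 h_mesh hOmh OmhOm
  hatM heps eps_diam _ _ S_theta _ [B f_bd] _ _ _ _ _ u_Vh u_int u_bdry x Omh_x.
have [S_unit [S_sym _]] := S_theta.
have h_le : h <= 2 * Mb by have := diam_le (ex_intro _ x0 Omx0) Om_bd; lra.
have NhI_Omh z : NhI Om M eps z -> Om_h M z.
  by move=> [_ [Omz dz]]; apply: hOmh; split => //; lra.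
have f_le_sup z : Om_h M z -> `|f z| <= sup [set `|f y| | y in Om_h M].
  move=> Omh_z; apply: ub_le_sup; last by exists z.
  by exists B => _ [y /OmhOm Omy <-]; exact: f_bd.
have eps_gt0 : 0 < eps := lt_le_trans h_gt0 heps.
have [T [TM Tx]] := interior_subset Omh_x.
rewrite addrC mulrC; apply: (Vh_norm_le u_Vh TM Tx).
apply: (comparison_norm_le (I := NhI Om M eps) hatM eps_gt0 S_unit S_sym
  (Stheta_neq_nil d_gt0 S_theta)) => //.
- move=> z [_ zI]; split; first by have := Om_bd z zI.1; lra.
  apply: (Om_in_stencil_within Om_open Om_bd hOmh) => //; try lra.
  by move=> T' T'M i j; rewrite h_mesh le_meshsize.
- exact: (le_trans (normr_ge0 (f x)) (f_le_sup x Omh_x)).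
- by move=> z Iz; rewrite u_int //; apply/f_le_sup/NhI_Omh.
- move=> z zN nIz; rewrite u_bdry; last by split.
  apply: (@le_bigmax_seq _ _ _ (nodes M) 0 z (fun z => z \notin NhI Om M eps)) => //.
  by apply/negP; rewrite in_setE.
Qed.
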